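(* Let $(V,\mathcal{E})$ be a forward or backward neutral genealogy model and let $\sigma\in\mathcal{P}$ be uniform and independent of $\mathcal{E}$. Then: 1. $\sigma(\mathcal{E})$ is completely neutral. 2(a). If $(V,\mathcal{E})$ is forward neutral, then for each $n$, $(\sigma(\mathcal{E}_m))_{m\ge n}$ is independent of $(\sigma_m)_{m\le n}$. 2(b). If $(V,\mathcal{E})$ is backward neutral, then for each $n$, $(\sigma(\mathcal{E}_m))_{m<n}$ is independent of $(\sigma_m)_{m\ge n}$.
   Context: Data: $\tau\in\mathbb{N}\cup\{\infty\}$, positive integers $(X_n)_{n<\tau}$, vectors $k_n=(k_n(i))_{i=1}^{X_n}$ of nonnegative integers with $\sum_ik_n(i)=X_{n+1}$. $V_n=\{(n,i):1\le i\le X_n\}$, $V=\bigcup_nV_n$. A genealogy model is a random edge set $\mathcal{E}\subset\bigcup_nV_n\times V_{n+1}$ such that each vertex of $V_{n+1}$ has exactly one parent in $V_n$ and the out-degrees in $V_n$ are a permutation of $k_n$. $\mathcal{E}_n=\mathcal{E}\cap(V_n\times V_{n+1})$, $K_n=(\mathrm{od}((n,i)))_i$, $\Xi_n$ = partition of $V_{n+1}$ into sets of vertices with a common parent. Forward neutral: for all $n$, $K_n$ is exchangeable and independent of $(\mathcal{E}_m)_{m<n}$. Backward neutral: for all $n$, $\Xi_n$ is exchangeable (its law is invariant under relabelling $V_{n+1}$ by any fixed permutation) and independent of $(\mathcal{E}_m)_{m>n}$. $\mathcal{E}_n$ is exchangeable if $\mathcal{E}_n$ has the same law as $\{(\pi(v),\pi'(w)):(v,w)\in\mathcal{E}_n\}$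 for every fixed permutation $\pi$ of $V_n$ and $\pi'$ of $V_{n+1}$. $\mathcal{E}$ is completely neutral if $(\mathcal{E}_n)_n$ are independent and each is exchangeable. $\mathcal{P}$ is the set of permutations of $V$ mapping each $V_n$ to itself, written $\sigma=(\sigma_n)$ with $\sigma_n=\sigma|_{V_n}$; $\sigma$ is uniform if the $\sigma_n$ are independent uniform permutations. $\sigma(E)=\{(\sigma(v),\sigma(w)):(v,w)\in E\}$, and $\sigma(\mathcal{E}_m)=\{(\sigma_m(v),\sigma_{m+1}(w)):(v,w)\in\mathcal{E}_m\}$. *)

From HB Require Import structures.
From mathcomp Require Import all_boot all_order all_algebra.
From mathcomp Require Import fingroup perm.
From mathcomp Require Import all_classical all_reals all_analysis.

Set Implicit Arguments.
Unset Strict Implicit.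
Unset Printing Implicit Defensive.

Import Order.TTheory GRing.Theory Num.Theory.

(* tau : option nat, None = infinity; lt_tau tau n  <->  n < tau *)
Definition lt_tau (tau : option nat) (n : nat) : bool :=
  if tau is Some t then (n < t)%N else true.

(* generation n has vertices 'I_(X n)  (vertex (n,i) <-> ordinal i-1) *)
Definition edges (X : nat -> nat) (n : nat) := {set 'I_(X n) * 'I_(X n.+1)}.

Definition parent_unique (X : nat -> nat) (n : nat) (e : edges X n) : Prop :=
  forall w : 'I_(X n.+1), #|[set v | (v, w) \in e]| = 1%N.

Definition outdeg (X : nat -> nat) (n : nat) (e : edges X n)
  : {ffun 'I_(X n) -> nat} := [ffun v => #|[set w | (v, w) \in e]|].

Definition offspring_ok (X : nat -> nat) (k : forall n, 'I_(X n) -> nat)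
  (n : nat) (e : edges X n) : Prop :=
  exists pi : {perm 'I_(X n)}, forall v, outdeg e v = k n (pi v).

Definition sibship (X : nat -> nat) (n : nat) (e : edges X n)
  : {set {set 'I_(X n.+1)}} :=
  [set [set w | (v, w) \in e] | v : 'I_(X n)] :\ finset.set0.

Definition relabel_edges (X : nat -> nat) (n : nat) (p : {perm 'I_(X n)})
  (q : {perm 'I_(X n.+1)}) (e : edges X n) : edges X n :=
  [set (p x.1, q x.2) | x in e].

Definition relabel_part (m : nat) (q : {perm 'I_m}) (B : {set {set 'I_m}})
  : {set {set 'I_m}} := finset.imset (fun b : {set 'I_m} => finset.imset q (mem b)) (mem B).

Section Prob.
Context (d : measure_display) (Omega : measurableType d) (R : realType)
  (P : probability Omega R).
Local Open Scope classical_set_scope.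
Local Open Scope ereal_scope.

(* events of the form {Y_i = y_i for all i in s}, s a finite list of indices in A;
   they generate sigma((Y_i)_{i in A}) and form a pi-system *)
Definition fdd_events (T : nat -> Type) (Y : forall i, Omega -> T i)
  (A : pred nat) : set (set Omega) :=
  [set B | exists (s : seq nat) (y : forall i, T i),
     all A s /\ B = [set w | forall i, i \in s -> Y i w = y i]].

Definition indep_fam (F G : set (set Omega)) : Prop :=
  forall a b, F a -> G b -> P (a `&` b) = P a * P b.

Definition mutually_indep (T : nat -> Type) (Y : forall i, Omega -> T i)
  (A : pred nat) : Prop :=
  forall (s : seq nat) (y : forall i, T i), uniq s -> all A s ->
    P [set w | forall i, i \in s -> Y i w = y i] =
    \prod_(i <- s) P [set w | Y i w = y i].

Definition discrete_rv (T : nat -> Type) (Y : forall i, Omega -> T i)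
  (A : pred nat) : Prop :=
  forall i, A i -> forall t : T i, measurable [set w | Y i w = t].

Definition valid_edge (tau : option nat) : pred nat :=
  fun n => lt_tau tau n.+1.

Definition genealogy_model (tau : option nat) (X : nat -> nat)
  (k : forall n, 'I_(X n) -> nat) (E : forall n, Omega -> edges X n) : Prop :=
  forall n w, lt_tau tau n.+1 -> parent_unique (E n w) /\ offspring_ok k (E n w).

Definition forward_neutral (tau : option nat) (X : nat -> nat)
  (E : forall n, Omega -> edges X n) : Prop :=
  forall n, lt_tau tau n.+1 ->
    (forall (pi : {perm 'I_(X n)}) (f : {ffun 'I_(X n) -> nat}),
       P [set w | outdeg (E n w) = f] =
       P [set w | outdeg (E n w) = [ffun i => f (pi i)]]) /\
    indep_fam
      (fdd_events (T := fun i => {ffun 'I_(X i) -> nat})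
                  (fun i w => outdeg (E i w)) (pred1 n))
      (fdd_events E (fun m => (m < n)%N)).

Definition backward_neutral (tau : option nat) (X : nat -> nat)
  (E : forall n, Omega -> edges X n) : Prop :=
  forall n, lt_tau tau n.+1 ->
    (forall (pi : {perm 'I_(X n.+1)}) (B : {set {set 'I_(X n.+1)}}),
       P [set w | sibship (E n w) = B] =
       P [set w | sibship (E n w) = relabel_part pi B]) /\
    indep_fam
      (fdd_events (T := fun i => {set {set 'I_(X i.+1)}})
                  (fun i w => sibship (E i w)) (pred1 n))
      (fdd_events E (fun m => (n < m)%N && lt_tau tau m.+1)).

Definition completely_neutral (tau : option nat) (X : nat -> nat)
  (E : forall n, Omega -> edges X n) : Prop :=
  mutually_indep E (valid_edge tau) /\
  forall n, lt_tau tau n.+1 ->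
    forall (p : {perm 'I_(X n)}) (q : {perm 'I_(X n.+1)}) (e : edges X n),
      P [set w | E n w = e] = P [set w | E n w = relabel_edges p q e].

Definition uniform_perms (tau : option nat) (X : nat -> nat)
  (sigma : forall n, Omega -> {perm 'I_(X n)}) : Prop :=
  mutually_indep sigma (lt_tau tau) /\
  forall n, lt_tau tau n -> forall p : {perm 'I_(X n)},
    P [set w | sigma n w = p] = ((X n)`!%:R)^-1%:E.

End Prob.

Definition perm_edges d (Omega : measurableType d) (X : nat -> nat)
  (sigma : forall n, Omega -> {perm 'I_(X n)})
  (E : forall n, Omega -> edges X n) : forall n, Omega -> edges X n :=
  fun m w => relabel_edges (sigma m w) (sigma m.+1 w) (E m w).

From HB Require Import structures.
From mathcomp Require Import all_boot all_order all_algebra.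
From mathcomp Require Import fingroup perm.
From mathcomp Require Import all_classical all_reals all_analysis.

Set Implicit Arguments.
Unset Strict Implicit.
Unset Printing Implicit Defensive.

Import Order.TTheory GRing.Theory Num.Theory.

(* The heart of the
   proof is a one-generation factorisation: conditionally on all the other
   information used, one of the two permutations acting on generation N is
   still uniform ("fresh"), and averaging over it leaves a quantity that only
   depends on a statistic of [E_N]:
   - forward neutrality: sigma_N+1 is fresh and the statistic is the
     out-degree vector K_N, exchangeable and independent of the past;
   - backward neutrality: sigma_N is fresh and the statistic is the sibship
     partition Xi_N, exchangeable and independent of the future.
   The combinatorial input is that two genealogies with the same K_N (resp.
   Xi_N) differ by a relabelling of the children (resp. the parents).
   Removing generations one at a time (latest first in the forward case,
   earliest first in the backward case) then gives mutual independence of the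
   generations of sigma(E) and their independence of the relevant sigma_m;
   exchangeability of each generation follows by averaging over both
   permutations. *)

Lemma fiber_perm (T U : finType) (f g : T -> U) :
  (forall u, #|[set x | f x == u]| = #|[set x | g x == u]|) ->
  exists r : {perm T}, forall x, g (r x) = f x.
Proof.
move=> eq_fib.
pose A x := enum [set y | f y == f x]; pose B x := enum [set y | g y == f x].
pose h x := nth x (B x) (index x (A x)).
have idx_lt x : index x (A x) < size (B x).
  by rewrite -cardE -eq_fib cardE index_mem mem_enum inE.
have hB x : g (h x) = f x.
  have : h x \in [set y | g y == f x] by rewrite -mem_enum mem_nth.
  by rewrite inE => /eqP.
have h_inj : injective h.
  move=> x1 x2 eq_h.
  have eq_f : f x1 = f x2 by rewrite -!hB eq_h.
  have eqA : A x1 = A x2 by rewrite /A eq_f.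
  have eqB : B x1 = B x2 by rewrite /B eq_f.
  have lt1 := idx_lt x1; rewrite eqA eqB in lt1.
  move: eq_h; rewrite /h eqA eqB (set_nth_default x2 x1 lt1) => /eqP.
  rewrite nth_uniq ?enum_uniq ?idx_lt // => /eqP eq_idx.
  have x1A : x1 \in A x2 by rewrite mem_enum inE eq_f.
  by rewrite -(nth_index x2 x1A) eq_idx nth_index // mem_enum inE.
by exists (perm h_inj) => x; rewrite permE hB.
Qed.

Lemma relabel_partK m (q : {perm 'I_m}) (B : {set {set 'I_m}}) :
  relabel_part q (relabel_part (q^-1)%g B) = B.
Proof.
rewrite /relabel_part -imset_comp (eq_imset _ (g := id)) ?imset_id // => S /=.
by rewrite -imset_comp (eq_imset _ (g := id)) ?imset_id // => x /=; rewrite permKV.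
Qed.

Lemma relabel_part1 m (B : {set {set 'I_m}}) : relabel_part 1%g B = B.
Proof.
rewrite /relabel_part (eq_imset _ (g := id)) ?imset_id // => S /=.
by rewrite (eq_imset _ (g := id)) ?imset_id // => x /=; rewrite perm1.
Qed.

Section Relabel.
Variables (X : nat -> nat) (n : nat).
Implicit Types (a b e : edges X n) (p : {perm 'I_(X n)}) (q : {perm 'I_(X n.+1)}).

Lemma mem_relabel_edges p q e x y :
  ((x, y) \in relabel_edges p q e) = (((p^-1)%g x, (q^-1)%g y) \in e).
Proof.
have -> : (x, y) = (fun z => (p z.1, q z.2)) ((p^-1)%g x, (q^-1)%g y).
  by rewrite /= !permKV.
rewrite mem_imset //; by move=> [a b] [c d] /= [/perm_inj -> /perm_inj ->].
Qed.

Lemma relabel_edgesM p1 q1 p2 q2 e :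
  relabel_edges p1 q1 (relabel_edges p2 q2 e) =
  relabel_edges (p2 * p1)%g (q2 * q1)%g e.
Proof. by apply/setP => -[x y]; rewrite !mem_relabel_edges !invMg !permM. Qed.

Lemma relabel_edges1 e : relabel_edges 1%g 1%g e = e.
Proof. by apply/setP => -[x y]; rewrite mem_relabel_edges !invg1 !perm1. Qed.

Lemma relabel_edges_inj p q : injective (relabel_edges p q).
Proof.
move=> e1 e2 eq12.
by rewrite -(relabel_edges1 e1) -(relabel_edges1 e2) -(mulgV p) -(mulgV q)
  -!relabel_edgesM eq12.
Qed.

Definition parent_uniqueb e := [forall w, #|[set v | (v, w) \in e]| == 1%N].

Lemma parent_uniqueP e : reflect (parent_unique e) (parent_uniqueb e).
Proof. by apply: (iffP forallP) => H w; apply/eqP; exact: H. Qed.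

Definition parent e (w : 'I_(X n.+1)) := [pick v | (v, w) \in e].

Lemma parentP e v w : parent_uniqueb e -> (parent e w == Some v) = ((v, w) \in e).
Proof.
move=> /forallP /(_ w) /cards1P [v0 par_w].
have mem_par u : ((u, w) \in e) = (u == v0).
  by move/setP: par_w => /(_ u); rewrite !inE.
rewrite /parent; case: pickP => [u|/(_ v0)]; last by rewrite mem_par eqxx.
by rewrite !mem_par => /eqP ->; apply/eqP/eqP => [[->]|->].
Qed.

Lemma parent_exists e w : parent_uniqueb e -> parent e w != None.
Proof.
move=> /forallP /(_ w) /cards1P [v0 par_w]; rewrite /parent.
case: pickP => // /(_ v0); move/setP: par_w => /(_ v0).
by rewrite !inE eqxx => ->.
Qed.

Definition children e (v : 'I_(X n)) := [set w | (v, w) \in e].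

Lemma children_relabel p q e v :
  children (relabel_edges p q e) v = q @: children e ((p^-1)%g v).
Proof.
apply/setP => w; rewrite inE mem_relabel_edges.
by rewrite -[in RHS](permKV q w) mem_imset ?inE //; exact: perm_inj.
Qed.

Lemma outdeg_relabel p q e :
  outdeg (relabel_edges p q e) = [ffun v => outdeg e ((p^-1)%g v)].
Proof.
apply/ffunP => v; rewrite !ffunE -[LHS]/#|children _ v| children_relabel.
by rewrite card_imset //; exact: perm_inj.
Qed.

Lemma parent_unique_relabel p q e :
  parent_uniqueb e -> parent_uniqueb (relabel_edges p q e).
Proof.
move=> /forallP pu_e; apply/forallP => w.
have -> : [set v | (v, w) \in relabel_edges p q e] =
          p @: [set v | (v, (q^-1)%g w) \in e].
  apply/setP => v; rewrite inE mem_relabel_edges.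
  by rewrite -{2}(permKV p v) mem_imset ?inE //; exact: perm_inj.
by rewrite card_imset //; exact: perm_inj.
Qed.

(* Distinct parents have disjoint, hence distinct nonempty, sets of children. *)
Lemma children_inj e : parent_uniqueb e ->
  {in [set v | children e v != finset.set0] &, injective (children e)}.
Proof.
move=> pu_e v1 v2; rewrite inE => /set0Pn [w w1] _ eq12.
have w2 : w \in children e v2 by rewrite -eq12.
rewrite !inE -!(parentP _ _ pu_e) in w1 w2.
by move: w1 w2 => /eqP -> /eqP [].
Qed.

Lemma sibshipE e :
  sibship e = children e @: [set v | children e v != finset.set0].
Proof.
apply/setP => S; rewrite [LHS]inE; apply/andP/imsetP.
  move=> [S0 /imsetP [v _ eqS]]; exists v => //.
  by rewrite inE -[children e v]/[set w | (v, w) \in e] -eqS; rewrite finset.in_set1 in S0.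
by move=> [v]; rewrite inE => v0 ->; rewrite finset.in_set1 v0; split => //; exact: imset_f.
Qed.

Lemma card_children_fiber e S : parent_uniqueb e ->
  #|[set v | children e v == S]| =
  if S == finset.set0 then (X n - #|sibship e|)%N else (S \in sibship e : nat).
Proof.
move=> pu_e.
have card_sib : #|sibship e| = #|[set v | children e v != finset.set0]|.
  by rewrite sibshipE card_in_imset //; exact: children_inj.
case: eqP => [->|/eqP S0].
  transitivity (#|'I_(X n)| - #|sibship e|)%N; last by rewrite card_ord.
  rewrite -(cardsC [set v | children e v == finset.set0]) card_sib.
  rewrite (_ : ~: _ = [set v | children e v != finset.set0]) ?addnK //.
  by apply/setP => v; rewrite !inE.
case: (boolP (S \in sibship e)) => [|Sn] /=.
  rewrite sibshipE => /imsetP [v0 v0n ->]; apply/eqP/cards1P; exists v0.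
  apply/setP => v; rewrite !inE; apply/eqP/eqP => [eqv|->] //.
  apply: (children_inj pu_e) => //.
  by rewrite inE eqv; rewrite inE in v0n.
apply/eqP; rewrite cards_eq0; apply/eqP/setP => v; rewrite !inE.
by apply: contraNF Sn => /eqP eqS; rewrite -eqS sibshipE imset_f // inE eqS.
Qed.

Lemma sibship_relabel p q e :
  sibship (relabel_edges p q e) = relabel_part q (sibship e).
Proof.
apply/setP => S; rewrite /relabel_part !sibshipE; apply/imsetP/imsetP.
  move=> [v]; rewrite inE children_relabel imset_eq0 => v0 ->.
  by exists (children e ((p^-1)%g v)); rewrite // imset_f // inE.
move=> [T /imsetP [u]]; rewrite inE => u0 -> ->.
by exists (p u); rewrite ?inE children_relabel permK ?imset_eq0.
Qed.

Lemma outdeg_orbit b b' : parent_uniqueb b -> parent_uniqueb b' ->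
  outdeg b = outdeg b' -> exists r, relabel_edges 1%g r b = b'.
Proof.
move=> pu_b pu_b' eq_deg.
have fibE c v : parent_uniqueb c ->
    [set w | parent c w == Some v] = children c v.
  by move=> pu_c; apply/setP => w; rewrite !inE parentP.
have fib0 c : parent_uniqueb c -> [set w | parent c w == None] = finset.set0.
  by move=> pu_c; apply/setP => w; rewrite !inE (negbTE (parent_exists _ pu_c)).
have [|r par_r] := @fiber_perm _ _ (parent b) (parent b').
  case=> [v|]; last by rewrite !fib0.
  by rewrite !fibE //; move/ffunP: eq_deg => /(_ v); rewrite !ffunE.
exists r; apply/setP => -[x y]; rewrite mem_relabel_edges invg1 perm1.
by rewrite -!parentP // -(par_r ((r^-1)%g y)) permKV.
Qed.

Lemma sibship_orbit b b' : parent_uniqueb b -> parent_uniqueb b' ->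
  sibship b = sibship b' -> exists r, relabel_edges r 1%g b = b'.
Proof.
move=> pu_b pu_b' eq_sib.
have [|r ch_r] := @fiber_perm _ _ (children b) (children b').
  by move=> S; rewrite !card_children_fiber // eq_sib.
exists r; apply/setP => -[x y]; rewrite mem_relabel_edges invg1 perm1.
by have := ch_r ((r^-1)%g x); rewrite permKV => /setP /(_ y); rewrite !inE => ->.
Qed.

(* For a
   genealogy [a] it depends on [a] and [p] only through the out-degree vector
   of [relabel_edges p 1 a], which is what [outdeg_count] records. *)
Definition child_count p a e : nat :=
  \sum_(q : {perm 'I_(X n.+1)}) (relabel_edges p q a == e).

Definition outdeg_count (f : {ffun 'I_(X n) -> nat}) e : nat :=
  if [pick b | parent_uniqueb b && (outdeg b == f)] is Some b
  then child_count 1%g b e else 0.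

Lemma child_countE p a e : parent_uniqueb a ->
  child_count p a e = outdeg_count [ffun v => outdeg a ((p^-1)%g v)] e.
Proof.
move=> pu_a; rewrite /outdeg_count; case: pickP => [b /andP [pu_b /eqP deg_b]|].
  have [|r eq_r] := outdeg_orbit pu_b (parent_unique_relabel p 1%g pu_a).
    by rewrite deg_b outdeg_relabel.
  rewrite /child_count [RHS](reindex_inj (mulgI r)); apply: eq_bigr => q _.
  have -> : relabel_edges p q a = relabel_edges 1 q (relabel_edges p 1 a).
    by rewrite relabel_edgesM mulg1 mul1g.
  by rewrite -eq_r relabel_edgesM mulg1.
by move=> /(_ (relabel_edges p 1%g a)); rewrite parent_unique_relabel // outdeg_relabel eqxx.
Qed.

(* Symmetrically, the number of parent relabellings [p] with
   [relabel_edges p q a = e] only depends on the sibship partition of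
   [relabel_edges 1 q a]. *)
Definition parent_count q a e : nat :=
  \sum_(p : {perm 'I_(X n)}) (relabel_edges p q a == e).

Definition sibship_count (B : {set {set 'I_(X n.+1)}}) e : nat :=
  if [pick b | parent_uniqueb b && (sibship b == B)] is Some b
  then parent_count 1%g b e else 0.

Lemma parent_countE q a e : parent_uniqueb a ->
  parent_count q a e = sibship_count (relabel_part q (sibship a)) e.
Proof.
move=> pu_a; rewrite /sibship_count; case: pickP => [b /andP [pu_b /eqP sib_b]|].
  have [|r eq_r] := sibship_orbit pu_b (parent_unique_relabel 1%g q pu_a).
    by rewrite sib_b sibship_relabel.
  rewrite /parent_count [RHS](reindex_inj (mulgI r)); apply: eq_bigr => p _.
  have -> : relabel_edges p q a = relabel_edges p 1 (relabel_edges 1 q a).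
    by rewrite relabel_edgesM mulg1 mul1g.
  by rewrite -eq_r relabel_edgesM mulg1.
by move=> /(_ (relabel_edges 1%g q a)); rewrite parent_unique_relabel // sibship_relabel eqxx.
Qed.

(* Out-degrees are at most [X n.+1], so the out-degree vector can be seen as a
   statistic with values in a finite type. *)
Definition outdeg_fin e : {ffun 'I_(X n) -> 'I_(X n.+1).+1} :=
  [ffun v => inord (outdeg e v)].

Definition fin_outdeg (g : {ffun 'I_(X n) -> 'I_(X n.+1).+1}) : {ffun 'I_(X n) -> nat} :=
  [ffun v => g v : nat].

Lemma outdeg_finK e : fin_outdeg (outdeg_fin e) = outdeg e.
Proof.
apply/ffunP => v; rewrite !ffunE inordK // ltnS.
by rewrite (leq_trans (max_card _)) // card_ord.
Qed.

Lemma outdeg_finE e g : (outdeg_fin e == g) = (outdeg e == fin_outdeg g).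
Proof.
have fin_inj : injective fin_outdeg.
  by move=> g1 g2 /ffunP eq12; apply/ffunP => v; have := eq12 v; rewrite !ffunE => /val_inj.
by rewrite -outdeg_finK (inj_eq fin_inj).
Qed.

End Relabel.

Local Open Scope classical_set_scope.
Local Open Scope ring_scope.

Section RealProbability.
Variables (d : measure_display) (Omega : measurableType d) (R : realType)
  (P : probability Omega R).

(* Probabilities are finite, so we compute with their real values. *)
Definition pr (A : set Omega) : R := fine (P A).

Lemma prE A : measurable A -> P A = (pr A)%:E.
Proof. by move=> mA; rewrite /pr fineK //; exact: fin_num_measure. Qed.

Lemma pr0 : pr set0 = 0.
Proof. by rewrite /pr measure0. Qed.

Lemma prT : pr setT = 1.
Proof. by rewrite /pr probability_setT. Qed.

Lemma pr_indep A B : measurable A -> measurable B ->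
  P (A `&` B) = (P A * P B)%E -> pr (A `&` B) = pr A * pr B.
Proof. by move=> mA mB h; apply: EFin_inj; rewrite EFinM -!prE //; exact: measurableI. Qed.

Section FiniteValued.
Variables (T : finType) (Z : Omega -> T).
Hypothesis mZ : forall t, measurable [set w | Z w = t].

Lemma measurable_mem (r : seq T) : measurable [set w | Z w \in r].
Proof.
elim: r => [|t r IH].
  by rewrite (_ : [set w | Z w \in [::]] = set0) //; apply/seteqP; split => w.
rewrite (_ : [set w | Z w \in t :: r] = [set w | Z w = t] `|` [set w | Z w \in r]).
  exact: measurableU.
apply/seteqP; split => w /=; rewrite inE.
  by case/orP => [/eqP ->|H]; [left|right].
by case => [->|->]; rewrite ?eqxx ?orbT.
Qed.

Lemma measurable_pred (S : pred T) : measurable [set w | S (Z w)].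
Proof.
rewrite (_ : [set w | S (Z w)] = [set w | Z w \in seq.filter S (enum T)]).
  exact: measurable_mem.
by apply/seteqP; split => w /=; rewrite mem_filter mem_enum andbT.
Qed.

Lemma pr_partition A : measurable A ->
  pr A = \sum_(t : T) pr (A `&` [set w | Z w = t]).
Proof.
move=> mA.
have split_mem r : uniq r -> P (A `&` [set w | Z w \in r]) =
    (\sum_(t <- r) P (A `&` [set w | Z w = t]))%E.
  elim: r => [|t r IH] /=.
    rewrite big_nil (_ : A `&` _ = set0) ?measure0 //.
    by apply/seteqP; split => w // [].
  move=> /andP [tr ur]; rewrite big_cons -IH //.
  rewrite (_ : A `&` [set w | Z w \in t :: r] =
               (A `&` [set w | Z w = t]) `|` (A `&` [set w | Z w \in r])).
    rewrite measureU //; try (apply: measurableI => //; exact: measurable_mem).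
    apply/seteqP; split => w // [[_ H1] [_ H2]]; move: tr; by rewrite -H1 H2.
  apply/seteqP; split => w /=.
    by case=> Aw; rewrite inE => /orP [/eqP ->|H]; [left|right].
  by case=> -[Aw H]; split => //; rewrite inE ?H ?eqxx ?orbT.
have := split_mem _ (enum_uniq T).
rewrite (_ : A `&` [set w | Z w \in enum T] = A); last first.
  by apply/seteqP; split => [w []//|w Aw]; split => //=; rewrite mem_enum.
rewrite big_enum /= /pr => ->.
rewrite (eq_bigr (fun t => (pr (A `&` [set w | Z w = t]))%:E)) ?sumEFin //.
by move=> t _; rewrite -prE //; exact: measurableI.
Qed.

End FiniteValued.
End RealProbability.

Definition upd (T : nat -> Type) (y : forall j, T j) (i : nat) (x : T i) :
  forall j, T j :=
  fun j => if (i =P j) is ReflectT e then eq_rect i T x j e else y j.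

Lemma upd_eq (T : nat -> Type) (y : forall j, T j) i (x : T i) : upd y x i = x.
Proof. by rewrite /upd; case: (i =P i) => [e|] //; rewrite (eq_irrelevance e erefl). Qed.

Lemma upd_neq (T : nat -> Type) (y : forall j, T j) i (x : T i) j :
  i != j -> upd y x j = y j.
Proof. by rewrite /upd; case: (i =P j). Qed.

Lemma fdd_events1 d (Omega : measurableType d) (T : nat -> Type)
    (Y : forall i, Omega -> T i) (A : pred nat) (y0 : forall i, T i) N (t : T N) :
  A N -> fdd_events Y A [set w | Y N w = t].
Proof.
move=> AN; exists [:: N], (upd y0 t); split; first by rewrite /= AN.
apply/seteqP; split => w /=; first by move=> <- i; rewrite inE => /eqP ->; rewrite upd_eq.
by move=> /(_ N (mem_head _ _)); rewrite upd_eq.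
Qed.

Lemma exists_extreme (T : eqType) (before : rel T) :
  transitive before -> (forall x y, x != y -> before x y || before y x) ->
  forall s, s != [::] -> exists2 N, N \in s & {in s, forall i, i != N -> before N i}.
Proof.
move=> trans total; elim=> [//|x s IH] _.
case: (eqVneq s [::]) => [->|/IH [N Ns minN]].
  by exists x; rewrite ?mem_head // => i; rewrite inE => ->.
have [xN|] := eqVneq x N.
  exists N; first by rewrite inE Ns orbT.
  by move=> i; rewrite inE -xN => /orP [-> //|/minN]; rewrite xN.
move=> /total /orP [bxN|bNx].
  exists x; first exact: mem_head.
  move=> i; rewrite inE => /orP [/eqP -> /eqP //|i_s _].
  by have [-> //|/(minN _ i_s) bNi] := eqVneq i N; exact: trans bNi.
exists N; first by rewrite inE Ns orbT.
by move=> i; rewrite inE => /orP [/eqP -> _|/minN //]; exact: bNx.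
Qed.

Section Coordinates.
Variables (d : measure_display) (Omega : measurableType d) (T : nat -> finType)
  (Y : forall i, Omega -> T i).

Fixpoint coords_type (l : seq nat) : finType :=
  if l is i :: l' then (T i * coords_type l')%type else unit.

Fixpoint coords (l : seq nat) (w : Omega) : coords_type l :=
  match l return coords_type l with
  | [::] => tt | i :: l' => (Y i w, coords l' w) end.

Lemma coordsP l w w' :
  coords l w = coords l w' <-> (forall i, i \in l -> Y i w = Y i w').
Proof.
elim: l => [|i l IH] /=; first by split => // _ [].
split; first by case=> h1 /IH h2 j; rewrite inE => /orP [/eqP ->|]; [exact: h1|exact: h2].
by move=> H; rewrite (H i (mem_head _ _)) (proj2 IH) // => j jl; apply: H; rewrite inE jl orbT.
Qed.

Lemma measurable_coords (A : pred nat) l v : discrete_rv Y A -> all A l ->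
  measurable [set w | coords l w = v].
Proof.
move=> mY; elim: l v => [|i l IH] /= v.
  by case: v => _; rewrite (_ : [set w | tt = tt] = setT) //; apply/seteqP; split.
move=> /andP [Ai Al]; case: v => t v.
rewrite (_ : [set w | (Y i w, coords l w) = (t, v)] =
             [set w | Y i w = t] `&` [set w | coords l w = v]).
  by apply: measurableI; [exact: mY|exact: IH].
by apply/seteqP; split => w /=; [case=> -> ->|case=> -> ->].
Qed.

End Coordinates.

Lemma lt_tau_valid tau m : valid_edge tau m -> lt_tau tau m.
Proof. by rewrite /valid_edge /lt_tau; case: tau => // t; apply: ltnW. Qed.

Section Model.
Variables (d : measure_display) (Omega : measurableType d) (R : realType)
  (P : probability Omega R)
  (tau : option nat) (X : nat -> nat) (k : forall n, 'I_(X n) -> nat)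
  (E : forall n, Omega -> edges X n)
  (sigma : forall n, Omega -> {perm 'I_(X n)}).
Hypotheses (mE : discrete_rv E (valid_edge tau))
  (msigma : discrete_rv sigma (lt_tau tau))
  (gen_E : genealogy_model tau k E) (unif_sigma : uniform_perms P tau sigma)
  (indep_sigma_E :
     indep_fam P (fdd_events sigma (lt_tau tau)) (fdd_events E (valid_edge tau))).

Local Notation pr := (pr P).

Definition sigma_at i (p : {perm 'I_(X i)}) := [set w | sigma i w = p].
Definition edges_at i (a : edges X i) := [set w | E i w = a].
Definition sigma_fdd (l : seq nat) (y : forall i, {perm 'I_(X i)}) :=
  [set w | forall i, i \in l -> sigma i w = y i].
Definition edges_fdd (l : seq nat) (a : forall i, edges X i) :=
  [set w | forall i, i \in l -> E i w = a i].
Arguments sigma_at i p : clear implicits.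
Arguments edges_at i a : clear implicits.

(* Probability that the permutations indexed by [l] take prescribed values. *)
Definition uniform_weight (l : seq nat) : R := \prod_(i <- l) ((X i)`!%:R)^-1.

Definition determined (lS lE : seq nat) (H : set Omega) :=
  forall w w', (forall i, i \in lS -> sigma i w = sigma i w') ->
    (forall i, i \in lE -> E i w = E i w') -> H w -> H w'.

Definition atom lS lE (w0 : Omega) :=
  sigma_fdd lS (fun i => sigma i w0) `&` edges_fdd lE (fun i => E i w0).

Lemma determined_sigma_fdd l y : determined l [::] (sigma_fdd l y).
Proof. by move=> w w' h _ Hw i Hi; rewrite -h // Hw. Qed.

Lemma determined_edges_fdd l a : determined [::] l (edges_fdd l a).
Proof. by move=> w w' _ h Hw i Hi; rewrite -h // Hw. Qed.

Lemma determined_sigma_at i p : determined [:: i] [::] (sigma_at i p).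
Proof. by move=> w w' h _; rewrite /sigma_at /= => <-; rewrite h // mem_head. Qed.

Lemma determined_edges_at i a : determined [::] [:: i] (edges_at i a).
Proof. by move=> w w' _ h; rewrite /edges_at /= => <-; rewrite h // mem_head. Qed.

Lemma determined_sub lS lE lS' lE' H : {subset lS <= lS'} -> {subset lE <= lE'} ->
  determined lS lE H -> determined lS' lE' H.
Proof.
by move=> sS sE dH w w' h1 h2; apply: dH => i Hi; [exact: h1 (sS _ Hi)|exact: h2 (sE _ Hi)].
Qed.

Lemma determinedI lS lE H1 H2 :
  determined lS lE H1 -> determined lS lE H2 -> determined lS lE (H1 `&` H2).
Proof. by move=> d1 d2 w w' h1 h2 [a b]; split; [exact: (d1 w)|exact: (d2 w)]. Qed.

Lemma sigma_fdd_nil y : sigma_fdd [::] y = setT.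
Proof. by apply/seteqP; split. Qed.

Lemma sigma_fdd_undup l y : sigma_fdd (undup l) y = sigma_fdd l y.
Proof. by apply/seteqP; split => w /= H i Hi; apply: H; rewrite ?mem_undup in Hi *. Qed.

Section Determined.
Variables (lS lE : seq nat).
Hypotheses (lS_tau : all (lt_tau tau) lS) (lE_valid : all (valid_edge tau) lE).

Let Z w := (coords (T := fun i => {perm 'I_(X i)}) sigma lS w,
             coords (T := edges X) E lE w).

Let mZ v : measurable [set w | Z w = v].
Proof.
rewrite (_ : [set w | Z w = v] =
  [set w | coords sigma lS w = v.1] `&` [set w | coords E lE w = v.2]).
  apply: measurableI; first exact: measurable_coords msigma lS_tau.
  exact: measurable_coords mE lE_valid.
by case: v => v1 v2; apply/seteqP; split => w; rewrite /Z /=; [case=> -> ->|case=> -> ->].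
Qed.

Let ZP w w' : Z w = Z w' <-> atom lS lE w' w.
Proof.
rewrite /Z /atom /sigma_fdd /edges_fdd /=; split.
  by case=> /coordsP h1 /coordsP h2; split => i Hi; [rewrite h1|rewrite h2].
by case=> h1 h2; congr pair; apply/coordsP.
Qed.

(* Determined events are measurable: they are unions of atoms. *)
Lemma measurable_determined H : determined lS lE H -> measurable H.
Proof.
move=> dH; pose S v := `[< exists w0, H w0 /\ Z w0 = v >].
rewrite (_ : H = [set w | S (Z w)]); first exact: (measurable_pred mZ S).
apply/seteqP; split => w /=; first by move=> Hw; apply/asboolP; exists w.
move/asboolP => [w0 [Hw0 /ZP [h1 h2]]].
by apply: (dH w0 w _ _ Hw0) => i Hi; [rewrite h1|rewrite h2].
Qed.

Lemma pr_determined_factor H B (c : R) : determined lS lE H -> measurable B ->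
  (forall w0, H w0 -> pr (atom lS lE w0 `&` B) = c * pr (atom lS lE w0)) ->
  pr (H `&` B) = c * pr H.
Proof.
move=> dH mB on_atoms; have mH := measurable_determined dH.
rewrite (pr_partition P mZ (measurableI _ _ mH mB)) (pr_partition P mZ mH) mulr_sumr.
apply: eq_bigr => v _.
case: (pselect (exists w0, H w0 /\ Z w0 = v)) => [[w0 [Hw0 <-]]|Hn].
  have atomE : H `&` [set w | Z w = Z w0] = atom lS lE w0.
    apply/seteqP; split => w /=; first by move=> [_ /ZP].
    move=> Hw; split; last exact/ZP.
    by case: Hw => h1 h2; apply: (dH w0) => // i Hi; [rewrite h1|rewrite h2].
  rewrite atomE -on_atoms //; congr pr.
  by rewrite -atomE; apply/seteqP; split => w /=; case=> -[].
have no_atom G : G `<=` H -> G `&` [set w | Z w = v] = set0.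
  by move=> GH; apply/seteqP; split => w // [/GH Hw Zw]; apply: Hn; exists w.
by rewrite !no_atom ?pr0 ?mulr0 //; apply: subIsetl.
Qed.

End Determined.

Lemma measurable_sigma_fdd l y : all (lt_tau tau) l -> measurable (sigma_fdd l y).
Proof.
by move=> Hl; apply: (measurable_determined Hl (isT : all _ [::])); exact: determined_sigma_fdd.
Qed.

Lemma measurable_edges_fdd l a : all (valid_edge tau) l -> measurable (edges_fdd l a).
Proof.
by move=> Hl; apply: (measurable_determined (isT : all _ [::]) Hl); exact: determined_edges_fdd.
Qed.

Lemma measurable_stat N (T : finType) (st : edges X N -> T) t : valid_edge tau N ->
  measurable [set w | st (E N w) = t].
Proof.
move=> HN; rewrite (_ : [set w | st (E N w) = t] = [set w | (fun a => st a == t) (E N w)]).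
  exact: (measurable_pred (mE HN) (fun a => st a == t)).
by apply/seteqP; split => w /= /eqP.
Qed.

Lemma pr_sigma_edges_fdd lS y lE a : uniq lS -> all (lt_tau tau) lS ->
  all (valid_edge tau) lE ->
  pr (sigma_fdd lS y `&` edges_fdd lE a) = uniform_weight lS * pr (edges_fdd lE a).
Proof.
move=> ulS HlS HlE.
have mEa := measurable_edges_fdd a HlE.
have h := indep_sigma_E (ex_intro _ lS (ex_intro _ y (conj HlS erefl)))
                        (ex_intro _ lE (ex_intro _ a (conj HlE erefl))).
have hu := (proj1 unif_sigma) lS y ulS HlS.
apply: EFin_inj; rewrite -prE; last by apply: measurableI => //; exact: measurable_sigma_fdd.
rewrite -/(sigma_fdd lS y) -/(edges_fdd lE a) in h hu.
rewrite h hu (prE P mEa) EFinM; congr (_ * _)%E.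
rewrite /uniform_weight -prodEFin; apply: eq_big_seq => i Hi.
by rewrite (proj2 unif_sigma) //; exact: (allP HlS).
Qed.

Lemma pr_sigma_fdd_indep lS y lE G : uniq lS -> all (lt_tau tau) lS ->
  all (valid_edge tau) lE -> determined [::] lE G ->
  pr (sigma_fdd lS y `&` G) = uniform_weight lS * pr G.
Proof.
move=> ulS HlS HlE dG; rewrite setIC.
apply: (pr_determined_factor (isT : all _ [::]) HlE dG (measurable_sigma_fdd y HlS)).
move=> w0 _; have -> : atom [::] lE w0 = edges_fdd lE (fun i => E i w0).
  by rewrite /atom sigma_fdd_nil setTI.
by rewrite setIC pr_sigma_edges_fdd.
Qed.

Lemma pr_fresh_sigma i q lS lE H : lt_tau tau i -> i \notin lS ->
  all (lt_tau tau) lS -> all (valid_edge tau) lE -> determined lS lE H ->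
  pr (sigma_at i q `&` H) = ((X i)`!%:R)^-1 * pr H.
Proof.
move=> Hi ilS HlS HlE dH; rewrite setIC.
apply: (pr_determined_factor HlS HlE dH (msigma Hi q)) => w0 _.
set y0 := fun j => sigma j w0.
have undup_tau : all (lt_tau tau) (undup lS).
  by apply/allP => j; rewrite mem_undup; exact: (allP HlS).
have sigmaE : sigma_fdd lS y0 `&` sigma_at i q = sigma_fdd (i :: undup lS) (upd y0 q).
  apply/seteqP; split => w /=.
    move=> [H1 H2] j; rewrite inE => /orP [/eqP ->|Hj]; first by rewrite upd_eq.
    rewrite upd_neq; first by apply: H1; rewrite -mem_undup.
    by apply: contra ilS => /eqP ->; rewrite -mem_undup.
  move=> H1; split; last by have := H1 i (mem_head _ _); rewrite upd_eq.
  move=> j Hj; rewrite H1 ?inE ?mem_undup ?Hj ?orbT // upd_neq //.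
  by apply: contra ilS => /eqP ->.
have uS : uniq (i :: undup lS) by rewrite /= mem_undup ilS undup_uniq.
have aS : all (lt_tau tau) (i :: undup lS) by rewrite /= Hi undup_tau.
rewrite /atom -setIA (setIC (edges_fdd _ _)) setIA sigmaE pr_sigma_edges_fdd //.
rewrite -(sigma_fdd_undup lS) pr_sigma_edges_fdd ?undup_uniq //.
by rewrite /uniform_weight big_cons mulrA.
Qed.

Section Statistic.
Variables (N : nat) (T : finType) (st : edges X N -> T) (C : pred nat).
Hypothesis N_valid : valid_edge tau N.
Hypothesis st_indep : forall l a t, all C l -> all (valid_edge tau) l ->
  pr ([set w | st (E N w) = t] `&` edges_fdd l a) =
  pr [set w | st (E N w) = t] * pr (edges_fdd l a).

Lemma pr_stat_indep lS lE H t : all (lt_tau tau) lS -> all (valid_edge tau) lE ->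
  all C lE -> determined lS lE H ->
  pr ([set w | st (E N w) = t] `&` H) = pr [set w | st (E N w) = t] * pr H.
Proof.
move=> HlS HlE HC dH; rewrite setIC.
apply: (pr_determined_factor HlS HlE dH (measurable_stat st t N_valid)) => w0 _.
have undup_tau : all (lt_tau tau) (undup lS).
  by apply/allP => j; rewrite mem_undup; exact: (allP HlS).
have dG : determined [::] (N :: lE)
    (edges_fdd lE (fun i => E i w0) `&` [set w | st (E N w) = t]).
  apply: determinedI; last by move=> w w' _ h <-; rewrite h // mem_head.
  apply: (determined_sub _ _ (@determined_edges_fdd lE _)) => // j Hj.
  by rewrite inE Hj orbT.
rewrite /atom -(sigma_fdd_undup lS) -setIA.
rewrite (pr_sigma_fdd_indep _ (undup_uniq _) undup_tau _ dG) /=; last by rewrite N_valid.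
rewrite (pr_sigma_fdd_indep _ (undup_uniq _) undup_tau HlE (@determined_edges_fdd _ _)).
by rewrite setIC st_indep // mulrCA.
Qed.

End Statistic.

Lemma edges_at_not_unique m a : valid_edge tau m -> ~~ parent_uniqueb a ->
  edges_at m a = set0.
Proof.
move=> Hm pu_a; apply/seteqP; split => w // Ew; have [/parent_uniqueP pu _] := gen_E w Hm.
by move: pu_a; rewrite /edges_at /= in Ew; rewrite -Ew pu.
Qed.

Lemma sum_by_stat N (T : finType) (st : edges X N -> T) (G : T -> R) A :
  valid_edge tau N -> measurable A ->
  \sum_(a : edges X N) G (st a) * pr (A `&` edges_at N a) =
  \sum_(t : T) G t * pr (A `&` [set w | st (E N w) = t]).
Proof.
move=> HN mA.
transitivity (\sum_(t : T) \sum_(a : edges X N)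
                G t * ((st a == t)%:R * pr (A `&` edges_at N a))).
  rewrite exchange_big; apply: eq_bigr => a _.
  rewrite (bigD1 (st a)) //= eqxx mul1r big1 ?addr0 // => t /negbTE.
  by rewrite eq_sym => ->; rewrite mul0r mulr0.
apply: eq_bigr => t _; rewrite -mulr_sumr; congr (_ * _).
rewrite (pr_partition P (mE HN) (measurableI _ _ mA (measurable_stat st t HN))).
apply: eq_bigr => a _; case: eqP => [<-|Hne].
  rewrite mul1r; congr pr; apply/seteqP; split => w /=.
    by case=> Aw Ew; split => //; split => //; rewrite /edges_at /= in Ew; rewrite Ew.
  by case=> -[Aw _] Ew.
rewrite mul0r (_ : _ `&` _ = set0) ?pr0 //.
by apply/seteqP; split => w // [[Aw Sw] Ew]; apply: Hne; rewrite -Sw Ew.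
Qed.

(* One generation of the relabelled genealogy, [rel (sigma o) (sigma r) (E N)],
   where the permutation [sigma r] is "fresh": not involved in the events it
   is compared with.  Forward neutrality uses [o = N], [r = N.+1]; backward
   neutrality [o = N.+1], [r = N]. *)
Section FreshStep.
Variables (N o r : nat)
  (rel : {perm 'I_(X o)} -> {perm 'I_(X r)} -> edges X N -> edges X N).
Hypotheses (N_valid : valid_edge tau N) (o_tau : lt_tau tau o)
  (r_tau : lt_tau tau r) (r_neq_o : r != o).

Definition rel_event e := [set w | rel (sigma o w) (sigma r w) (E N w) = e].

Lemma measurable_rel_event e : measurable (rel_event e).
Proof.
apply: (measurable_determined (lS := [:: o; r]) (lE := [:: N])).
- by rewrite /= o_tau r_tau.
- by rewrite /= N_valid.
by move=> w w' hS hE; rewrite /rel_event /= => <-; rewrite !(hS, hE) ?inE ?eqxx ?orbT.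
Qed.

Lemma pr_rel_event_decompose e H : measurable H ->
  pr (rel_event e `&` H) =
  \sum_(p : {perm 'I_(X o)}) \sum_(q : {perm 'I_(X r)}) \sum_(a : edges X N)
    (rel p q a == e)%:R * pr (sigma_at o p `&` sigma_at r q `&` edges_at N a `&` H).
Proof.
move=> mH; have mS i (p : {perm 'I_(X i)}) : lt_tau tau i -> measurable (sigma_at i p).
  by move=> Hi; exact: msigma.
rewrite (pr_partition P (msigma o_tau) (measurableI _ _ (measurable_rel_event e) mH)).
apply: eq_bigr => p _.
rewrite (pr_partition P (msigma r_tau)); last first.
  by apply: measurableI => //; [exact: measurableI (measurable_rel_event e) mH|exact: mS].
apply: eq_bigr => q _.
rewrite (pr_partition P (mE N_valid)); last first.
  apply: measurableI; last exact: mS.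
  by apply: measurableI; [exact: measurableI (measurable_rel_event e) mH|exact: mS].
apply: eq_bigr => a _; rewrite /rel_event /sigma_at /edges_at.
case: eqP => [<-|Hne].
  rewrite mul1r; congr pr; apply/seteqP; split => w /=.
    by case=> -[[[Fw Hw] <-] <-] <-.
  by case=> -[[<- <-] <-] Hw.
rewrite mul0r (_ : _ `&` _ = set0) ?pr0 //; apply/seteqP; split => w //=.
by case=> -[[[Fw Hw] Sp] Sq] Ea; apply: Hne; rewrite -Sp -Sq -Ea.
Qed.

Variables (T : finType) (st : edges X N -> T)
  (cnt : {perm 'I_(X o)} -> T -> edges X N -> nat) (C : pred nat).

Definition rel_weight e : R :=
  \sum_(t : T) (cnt 1%g t e)%:R * pr [set w | st (E N w) = t].

Hypotheses
  (cntE : forall p a e, parent_uniqueb a ->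
     (\sum_(q : {perm 'I_(X r)}) (rel p q a == e))%N = cnt p (st a) e)
  (rel_weightE : forall p e,
     \sum_(t : T) (cnt p t e)%:R * pr [set w | st (E N w) = t] = rel_weight e)
  (st_indep : forall l a t, all C l -> all (valid_edge tau) l ->
     pr ([set w | st (E N w) = t] `&` edges_fdd l a) =
     pr [set w | st (E N w) = t] * pr (edges_fdd l a)).

(* Averaging over the fresh permutation [sigma r]. *)
Lemma pr_rel_event_average e lS lE H : r \notin lS -> all (lt_tau tau) lS ->
  all (valid_edge tau) lE -> determined lS lE H ->
  pr (rel_event e `&` H) = ((X r)`!%:R)^-1 *
    \sum_(p : {perm 'I_(X o)}) \sum_(a : edges X N)
      (cnt p (st a) e)%:R * pr ((sigma_at o p `&` H) `&` edges_at N a).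
Proof.
move=> rlS HlS HlE dH; have mH := measurable_determined HlS HlE dH.
have fresh p q a : pr (sigma_at o p `&` sigma_at r q `&` edges_at N a `&` H) =
                   ((X r)`!%:R)^-1 * pr ((sigma_at o p `&` H) `&` edges_at N a).
  rewrite (_ : _ `&` H = sigma_at r q `&` ((sigma_at o p `&` H) `&` edges_at N a)); last first.
    by apply/seteqP; split => w /=; [case=> -[[? ?] ?] ?|case=> ? [[? ?] ?]].
  apply: (@pr_fresh_sigma r q (o :: lS) (N :: lE)) => //.
  - by rewrite inE negb_or r_neq_o.
  - by rewrite /= o_tau.
  - by rewrite /= N_valid.
  apply: determinedI; last first.
    by apply: (determined_sub _ _ (@determined_edges_at N a)) => // j; rewrite !inE => ->.
  apply: determinedI.
    by apply: (determined_sub _ _ (@determined_sigma_at o p)) => // j; rewrite !inE => ->.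
  by apply: (determined_sub _ _ dH) => // j Hj; rewrite inE Hj orbT.
rewrite pr_rel_event_decompose // mulr_sumr; apply: eq_bigr => p _.
rewrite exchange_big mulr_sumr; apply: eq_bigr => a _.
case: (boolP (parent_uniqueb a)) => pu_a; last first.
  rewrite edges_at_not_unique // setI0 pr0 !mulr0 big1 // => q _.
  by rewrite !(setI0, set0I) pr0 mulr0.
rewrite -cntE // natr_sum !mulr_suml mulr_sumr; apply: eq_bigr => q _.
by rewrite fresh mulrCA.
Qed.

(* Then the statistic [st] is independent of the rest, and the average over
   its law does not depend on [sigma o]. *)
Lemma pr_rel_event_step e lS lE H : r \notin lS -> all (lt_tau tau) lS ->
  all (valid_edge tau) lE -> all C lE -> determined lS lE H ->
  pr (rel_event e `&` H) = ((X r)`!%:R)^-1 * rel_weight e * pr H.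
Proof.
move=> rlS HlS HlE HC dH; have mH := measurable_determined HlS HlE dH.
have mSH p : measurable (sigma_at o p `&` H) by apply: measurableI => //; exact: msigma.
have dSH p : determined (o :: lS) lE (sigma_at o p `&` H).
  apply: determinedI; last by apply: (determined_sub _ _ dH) => // j Hj; rewrite inE Hj orbT.
  by apply: (determined_sub _ _ (@determined_sigma_at o p)) => // j; rewrite !inE => ->.
rewrite (@pr_rel_event_average e lS lE H) // -mulrA; congr (_ * _).
transitivity (\sum_(p : {perm 'I_(X o)}) pr (sigma_at o p `&` H) * rel_weight e).
  apply: eq_bigr => p _.
  rewrite (@sum_by_stat N T st (fun t => (cnt p t e)%:R)) // -(rel_weightE p) mulr_sumr.
  apply: eq_bigr => t _; rewrite setIC (@pr_stat_indep N T st C N_valid st_indep (o :: lS) lE) //.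
    by rewrite mulrA mulrC.
  by rewrite /= o_tau.
rewrite -mulr_suml mulrC; congr (_ * _).
by rewrite (pr_partition P (msigma o_tau) mH); apply: eq_bigr => p _; rewrite setIC.
Qed.

(* Taking for [H] the sure event identifies the constant: the step says that
   [rel_event e] is independent of every event of the admissible form. *)
Lemma pr_rel_event_factor e lS lE H : r \notin lS -> all (lt_tau tau) lS ->
  all (valid_edge tau) lE -> all C lE -> determined lS lE H ->
  pr (rel_event e `&` H) = pr (rel_event e) * pr H.
Proof.
move=> rlS HlS HlE HC dH; rewrite (@pr_rel_event_step e lS lE H) //.
have := @pr_rel_event_step e [::] [::] setT isT isT isT isT (fun _ _ _ _ _ => I).
by rewrite setIT prT mulr1 => ->.
Qed.

End FreshStep.

Definition perm_edges_at m (e : edges X m) :=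
  [set w | perm_edges sigma E m w = e].
Definition perm_fdd (s : seq nat) (y : forall i, edges X i) :=
  [set w | forall i, i \in s -> perm_edges sigma E i w = y i].
Arguments perm_edges_at m e : clear implicits.

Lemma determined_perm_fdd s y : determined (s ++ map succn s) s (perm_fdd s y).
Proof.
move=> w w' h1 h2 Hw i Hi; rewrite -(Hw i Hi) /perm_edges.
by rewrite (h1 i) ?(h1 i.+1) ?(h2 i) // mem_cat ?Hi ?(map_f succn Hi) ?orbT.
Qed.

Lemma valid_perm_coords s : all (valid_edge tau) s ->
  all (lt_tau tau) (s ++ map succn s).
Proof.
move=> Hs; rewrite all_cat; apply/andP; split.
  by apply/allP => i Hi; apply: lt_tau_valid; exact: (allP Hs).
by apply/allP => j /mapP [i Hi ->]; exact: (allP Hs).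
Qed.

Lemma measurable_perm_fdd s y : all (valid_edge tau) s -> measurable (perm_fdd s y).
Proof.
move=> Hs; apply: (measurable_determined (valid_perm_coords Hs) Hs).
exact: determined_perm_fdd.
Qed.

Lemma measurable_perm_edges_at m e : valid_edge tau m -> measurable (perm_edges_at m e).
Proof.
move=> Hm.
exact: (@measurable_rel_event m m m.+1 (@relabel_edges X m) Hm (lt_tau_valid Hm) Hm e).
Qed.

Lemma perm_fdd_nil y : perm_fdd [::] y = setT.
Proof. by apply/seteqP; split. Qed.

Lemma perm_fdd_split s y N : N \in s ->
  perm_fdd s y = perm_edges_at N (y N) `&` perm_fdd (seq.filter (predC1 N) s) y.
Proof.
move=> Ns; apply/seteqP; split => w /=.
  move=> H; split; first exact: (H N Ns).
  by move=> i; rewrite mem_filter => /andP [_ Hi]; apply: H.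
move=> [H1 H2] i Hi; case: (eqVneq i N) => [->|Hne]; first exact: H1.
by apply: H2; rewrite mem_filter /= Hne.
Qed.

Lemma outdeg_fin_event N g :
  [set w | outdeg_fin (E N w) = g] = [set w | outdeg (E N w) = fin_outdeg g].
Proof.
by apply/seteqP; split => w /= /eqP; [rewrite outdeg_finE|rewrite -outdeg_finE] => /eqP.
Qed.

Section Forward.
Hypothesis fwd : forward_neutral P tau E.

(* Forward neutrality: the out-degree vector [K_N] is exchangeable ... *)
Lemma outdeg_weight_invariant N (p : {perm 'I_(X N)}) e : valid_edge tau N ->
  \sum_(g : {ffun 'I_(X N) -> 'I_(X N.+1).+1})
     (outdeg_count [ffun v => fin_outdeg g ((p^-1)%g v)] e)%:R *
     pr [set w | outdeg_fin (E N w) = g] =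
  \sum_(g : {ffun 'I_(X N) -> 'I_(X N.+1).+1})
     (outdeg_count [ffun v => fin_outdeg g (((1 : {perm 'I_(X N)})^-1)%g v)] e)%:R *
     pr [set w | outdeg_fin (E N w) = g].
Proof.
move=> HN.
have perm_inj : injective (fun g : {ffun 'I_(X N) -> 'I_(X N.+1).+1} => [ffun v => g (p v)]).
  by move=> g1 g2 /ffunP eq12; apply/ffunP => v; have := eq12 ((p^-1)%g v); rewrite !ffunE permKV.
rewrite [LHS](reindex_inj perm_inj); apply: eq_bigr => g _; congr (_ * _).
  by congr (outdeg_count _ e)%:R; apply/ffunP => v; rewrite !ffunE invg1 perm1 permKV.
rewrite !outdeg_fin_event /pr ((proj1 (fwd HN)) p (fin_outdeg g)); congr (fine (P _)).
by apply/seteqP; split => w /= ->; apply/ffunP => v; rewrite !ffunE.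
Qed.

(* ... and independent of the past of the genealogy. *)
Lemma outdeg_indep N l a g : valid_edge tau N -> all (fun m => (m < N)%N) l ->
  all (valid_edge tau) l ->
  pr ([set w | outdeg_fin (E N w) = g] `&` edges_fdd l a) =
  pr [set w | outdeg_fin (E N w) = g] * pr (edges_fdd l a).
Proof.
move=> HN Hl Hv.
rewrite outdeg_fin_event; apply: pr_indep.
- by rewrite -outdeg_fin_event; exact: measurable_stat.
- exact: measurable_edges_fdd.
apply: (proj2 (fwd HN)); last by exists l, a.
by apply: fdd_events1; [exact: (fun i => [ffun=> 0%N])|rewrite /= eqxx].
Qed.

Lemma forward_factor N e lS lE H : valid_edge tau N ->
  all (fun i => (i <= N)%N) lS -> all (lt_tau tau) lS ->
  all (fun i => (i < N)%N) lE -> all (valid_edge tau) lE -> determined lS lE H ->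
  pr (perm_edges_at N e `&` H) = pr (perm_edges_at N e) * pr H.
Proof.
move=> HN lS_le HlS lE_lt HlE dH.
apply: (@pr_rel_event_factor N N N.+1 (@relabel_edges X N) HN (lt_tau_valid HN) HN
  _ _ (@outdeg_fin X N)
  (fun p g e => outdeg_count [ffun v => fin_outdeg g ((p^-1)%g v)] e)
  (fun m => (m < N)%N) _ _ _ e lS lE H) => //.
- by rewrite eq_sym neq_ltn ltnSn.
- by move=> p a e' pu_a; rewrite outdeg_finK; exact: child_countE.
- by move=> p e'; exact: outdeg_weight_invariant.
- by move=> l a g Hl Hv; exact: outdeg_indep.
by apply/negP => /(allP lS_le); rewrite ltnn.
Qed.

Lemma forward_factor_fdd N e s t H : valid_edge tau N ->
  all (valid_edge tau) s -> all (lt_tau tau) t ->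
  all (fun i => (i < N)%N) s -> all (fun i => (i <= N)%N) t ->
  determined (t ++ s ++ map succn s) s H ->
  pr (perm_edges_at N e `&` H) = pr (perm_edges_at N e) * pr H.
Proof.
move=> HN Hs Ht s_lt t_le dH.
apply: (@forward_factor N e (t ++ s ++ map succn s) s H) => //.
- rewrite !all_cat t_le /=; apply/andP; split.
    by apply/allP => i /(allP s_lt) /ltnW.
  by apply/allP => j /mapP [i /(allP s_lt) ? ->].
- by rewrite all_cat Ht valid_perm_coords.
Qed.

End Forward.

Section Backward.
Hypothesis bwd : backward_neutral P tau E.

(* Backward neutrality: the sibship partition [Xi_N] is exchangeable ... *)
Lemma sibship_weight_invariant N (q : {perm 'I_(X N.+1)}) e : valid_edge tau N ->
  \sum_(B : {set {set 'I_(X N.+1)}})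
     (sibship_count (relabel_part q B) e)%:R * pr [set w | sibship (E N w) = B] =
  \sum_(B : {set {set 'I_(X N.+1)}})
     (sibship_count (relabel_part 1%g B) e)%:R * pr [set w | sibship (E N w) = B].
Proof.
move=> HN; rewrite [LHS](reindex_inj (can_inj (relabel_partK q))).
apply: eq_bigr => B _; rewrite relabel_partK relabel_part1.
by rewrite /pr -((proj1 (bwd HN)) (q^-1)%g B).
Qed.

(* ... and independent of the future of the genealogy. *)
Lemma sibship_indep N l a B : valid_edge tau N -> all (fun m => (N < m)%N) l ->
  all (valid_edge tau) l ->
  pr ([set w | sibship (E N w) = B] `&` edges_fdd l a) =
  pr [set w | sibship (E N w) = B] * pr (edges_fdd l a).
Proof.
move=> HN Hl Hv; apply: pr_indep.
- exact: measurable_stat.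
- exact: measurable_edges_fdd.
apply: (proj2 (bwd HN)).
  by apply: fdd_events1; [exact: (fun i => finset.set0)|rewrite /= eqxx].
exists l, a; split => //; apply/allP => m Hm.
by rewrite (allP Hl m Hm); exact: (allP Hv m Hm).
Qed.

Lemma backward_factor N e lS lE H : valid_edge tau N ->
  all (fun i => (N < i)%N) lS -> all (lt_tau tau) lS ->
  all (fun i => (N < i)%N) lE -> all (valid_edge tau) lE -> determined lS lE H ->
  pr (perm_edges_at N e `&` H) = pr (perm_edges_at N e) * pr H.
Proof.
move=> HN lS_gt HlS lE_gt HlE dH.
apply: (@pr_rel_event_factor N N.+1 N (fun q p a => relabel_edges p q a) HN HN
  (lt_tau_valid HN) _ _ (@sibship X N)
  (fun q B e => sibship_count (relabel_part q B) e)
  (fun m => (N < m)%N) _ _ _ e lS lE H) => //.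
- by rewrite neq_ltn ltnSn.
- by move=> q a e' pu_a; exact: parent_countE.
- by move=> q e'; exact: sibship_weight_invariant.
- by move=> l a B Hl Hv; exact: sibship_indep.
by apply/negP => /(allP lS_gt); rewrite ltnn.
Qed.

Lemma backward_factor_fdd N e s t H : valid_edge tau N ->
  all (valid_edge tau) s -> all (lt_tau tau) t ->
  all (fun i => (N < i)%N) s -> all (fun i => (N < i)%N) t ->
  determined (t ++ s ++ map succn s) s H ->
  pr (perm_edges_at N e `&` H) = pr (perm_edges_at N e) * pr H.
Proof.
move=> HN Hs Ht s_gt t_gt dH.
apply: (@backward_factor N e (t ++ s ++ map succn s) s H) => //.
- rewrite !all_cat t_gt s_gt /=.
  by apply/allP => j /mapP [i /(allP s_gt) /ltnW ? ->].
- by rewrite all_cat Ht valid_perm_coords.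
Qed.

End Backward.

(* Generations of [sigma(E)] are taken out one at a time, in the order given by
   [before]: the first one is independent of the remaining generations and of
   permutations [sigma_i] whose indices are in relation [tcond] with it. *)
Section Product.
Variables (before tcond : rel nat).
Hypotheses (before_trans : transitive before)
  (before_total : forall i j, i != j -> before i j || before j i).
Hypothesis factor : forall N e s t H, valid_edge tau N ->
  all (valid_edge tau) s -> all (lt_tau tau) t ->
  all (before N) s -> all (tcond^~ N) t ->
  determined (t ++ s ++ map succn s) s H ->
  pr (perm_edges_at N e `&` H) = pr (perm_edges_at N e) * pr H.

Lemma pr_perm_fdd_sigma_fdd s y t z : all (valid_edge tau) s -> all (lt_tau tau) t ->
  (forall i j, i \in t -> j \in s -> tcond i j) ->
  pr (perm_fdd s y `&` sigma_fdd t z) =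
  (\prod_(i <- undup s) pr (perm_edges_at i (y i))) * pr (sigma_fdd t z).
Proof.
move: {2}(size s) (leqnn (size s)) => n.
elim: n s => [|n IH] s size_s Hs Ht Hts; have [->|s_nil] := eqVneq s [::].
- by rewrite perm_fdd_nil setTI big_nil mul1r.
- by move: s_nil; rewrite -size_eq0 -leqn0 size_s.
- by rewrite perm_fdd_nil setTI big_nil mul1r.
have [N Ns minN] := exists_extreme before_trans before_total s_nil.
set s' := seq.filter (predC1 N) s.
have s'_valid : all (valid_edge tau) s'.
  by apply/allP => i; rewrite mem_filter => /andP [_ /(allP Hs)].
have s'_before : all (before N) s'.
  by apply/allP => i; rewrite mem_filter => /andP [/= iN /minN]; apply.
rewrite (perm_fdd_split y Ns) -setIA (@factor N (y N) s' t) //; first last.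
- apply: determinedI.
    apply: (determined_sub _ _ (@determined_perm_fdd s' y)) => // i Hi.
    by rewrite mem_cat Hi orbT.
  by apply: (determined_sub _ _ (@determined_sigma_fdd t z)) => // i Hi; rewrite mem_cat Hi.
- by apply/allP => i Hi; exact: Hts.
- exact: (allP Hs).
rewrite IH //; last 2 first.
- rewrite -ltnS (leq_trans _ size_s) // size_filter -(count_predC (predC1 N) s).
  rewrite -{1}[count _ s]addn0 ltn_add2l -has_count.
  by apply/hasP; exists N => //=; rewrite eqxx.
- by move=> i j Hi; rewrite mem_filter => /andP [_]; exact: Hts.
have undup_s : perm_eq (undup s) (N :: undup s').
  rewrite -filter_undup -rem_filter ?undup_uniq //.
  by apply: perm_to_rem; rewrite mem_undup.
by rewrite (perm_big _ undup_s) big_cons !mulrA.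
Qed.

Lemma pr_perm_fdd_undup s y : all (valid_edge tau) s ->
  pr (perm_fdd s y) = \prod_(i <- undup s) pr (perm_edges_at i (y i)).
Proof.
move=> Hs; have := @pr_perm_fdd_sigma_fdd s y [::] (fun=> 1%g) Hs isT.
by rewrite sigma_fdd_nil setIT prT mulr1; apply=> i j; rewrite in_nil.
Qed.

Lemma pr_perm_fdd s y : uniq s -> all (valid_edge tau) s ->
  pr (perm_fdd s y) = \prod_(i <- s) pr (perm_edges_at i (y i)).
Proof. by move=> us Hs; rewrite pr_perm_fdd_undup // undup_id. Qed.

Lemma perm_fdd_indep s y t z : all (valid_edge tau) s -> all (lt_tau tau) t ->
  (forall i j, i \in t -> j \in s -> tcond i j) ->
  pr (perm_fdd s y `&` sigma_fdd t z) = pr (perm_fdd s y) * pr (sigma_fdd t z).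
Proof. by move=> Hs Ht Hts; rewrite pr_perm_fdd_sigma_fdd // pr_perm_fdd_undup. Qed.

End Product.

(* Each generation of [sigma(E)] is exchangeable: averaging over the two
   independent uniform relabellings makes its law invariant. *)
Lemma pr_perm_edges_at_relabel n p q e : valid_edge tau n ->
  pr (perm_edges_at n e) = pr (perm_edges_at n (relabel_edges p q e)).
Proof.
move=> Hn; have tn := lt_tau_valid Hn.
set c := ((X n)`!%:R)^-1 * ((X n.+1)`!%:R)^-1 : R.
have uniform_avg e' : pr (perm_edges_at n e') =
    \sum_(p' : {perm 'I_(X n)}) \sum_(q' : {perm 'I_(X n.+1)}) \sum_(a : edges X n)
      (relabel_edges p' q' a == e')%:R * (c * pr (edges_at n a)).
  rewrite -(setIT (perm_edges_at n e')).
  rewrite (@pr_rel_event_decompose n n n.+1 (@relabel_edges X n) Hn tn Hn) //.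
  apply: eq_bigr => p' _; apply: eq_bigr => q' _; apply: eq_bigr => a _; congr (_ * _).
  have dE : determined [::] [:: n] (edges_at n a) by exact: determined_edges_at.
  rewrite setIT -setIA (@pr_fresh_sigma n p' [:: n.+1] [:: n]) //; first last.
  - apply: determinedI; last exact: (determined_sub _ _ dE).
    by apply: (determined_sub _ _ (@determined_sigma_at n.+1 q')).
  - by rewrite /= Hn.
  - by rewrite /= andbT; exact: Hn.
  - by rewrite inE eqn_leq ltnn andbF.
  by rewrite (@pr_fresh_sigma n.+1 q' [::] [:: n]) // ?mulrA //= Hn.
rewrite !uniform_avg [RHS](reindex_inj (mulIg p)); apply: eq_bigr => p' _.
rewrite [RHS](reindex_inj (mulIg q)); apply: eq_bigr => q' _.
apply: eq_bigr => a _; congr ((_ : bool)%:R * _).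
by rewrite -relabel_edgesM (inj_eq (@relabel_edges_inj X n p q)).
Qed.


Lemma perm_edges_completely_neutral :
  forward_neutral P tau E \/ backward_neutral P tau E ->
  completely_neutral P tau (perm_edges sigma E).
Proof.
move=> fwd_bwd; split => [s y us Hs|n Hn p q e].
  have prod : pr (perm_fdd s y) = \prod_(i <- s) pr (perm_edges_at i (y i)).
    case: fwd_bwd => [fwd|bwd].
      apply: (@pr_perm_fdd gtn leq) => //; first exact: rev_trans ltn_trans.
        by move=> i j; rewrite neq_ltn orbC.
      exact: forward_factor_fdd.
    apply: (@pr_perm_fdd ltn gtn) => //; first exact: ltn_trans.
      by move=> i j; rewrite neq_ltn.
    exact: backward_factor_fdd.
  rewrite (prE P (measurable_perm_fdd y Hs)) prod -prodEFin.
  by apply: eq_big_seq => i Hi; rewrite -prE //; apply: measurable_perm_edges_at; exact: (allP Hs).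
rewrite (prE P (measurable_perm_edges_at e Hn)).
by rewrite (prE P (measurable_perm_edges_at (relabel_edges p q e) Hn)) -pr_perm_edges_at_relabel.
Qed.

Lemma perm_fdd_indep_fam (S T : pred nat) :
  {subset S <= valid_edge tau} -> {subset T <= lt_tau tau} ->
  (forall s y t z, all S s -> all T t ->
     pr (perm_fdd s y `&` sigma_fdd t z) = pr (perm_fdd s y) * pr (sigma_fdd t z)) ->
  indep_fam P (fdd_events (perm_edges sigma E) S) (fdd_events sigma T).
Proof.
move=> ST TT fact a b [s [y [Hs ->]]] [t [z [Ht ->]]].
have Hs' : all (valid_edge tau) s by apply/allP => i /(allP Hs) /ST.
have Ht' : all (lt_tau tau) t by apply/allP => i /(allP Ht) /TT.
have mF := measurable_perm_fdd y Hs'; have mS := measurable_sigma_fdd z Ht'.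
by rewrite -/(perm_fdd s y) -/(sigma_fdd t z) !prE ?fact //; exact: measurableI.
Qed.

Lemma forward_perm_indep : forward_neutral P tau E -> forall n,
  indep_fam P (fdd_events (perm_edges sigma E) (fun m => (n <= m)%N && valid_edge tau m))
              (fdd_events sigma (fun m => (m <= n)%N && lt_tau tau m)).
Proof.
move=> fwd n; apply: perm_fdd_indep_fam => [m /andP []|m /andP []|s y t z Hs Ht] //.
apply: (@perm_fdd_indep gtn leq) => //.
- exact: rev_trans ltn_trans.
- by move=> i j; rewrite neq_ltn orbC.
- exact: forward_factor_fdd.
- by apply/allP => i /(allP Hs) /andP [].
- by apply/allP => i /(allP Ht) /andP [].
by move=> i j /(allP Ht) /andP [i_le _] /(allP Hs) /andP [le_j _]; exact: leq_trans le_j.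
Qed.

Lemma backward_perm_indep : backward_neutral P tau E -> forall n,
  indep_fam P (fdd_events (perm_edges sigma E) (fun m => (m < n)%N && valid_edge tau m))
              (fdd_events sigma (fun m => (n <= m)%N && lt_tau tau m)).
Proof.
move=> bwd n; apply: perm_fdd_indep_fam => [m /andP []|m /andP []|s y t z Hs Ht] //.
apply: (@perm_fdd_indep ltn gtn) => //.
- exact: ltn_trans.
- by move=> i j; rewrite neq_ltn.
- exact: backward_factor_fdd.
- by apply/allP => i /(allP Hs) /andP [].
- by apply/allP => i /(allP Ht) /andP [].
by move=> i j /(allP Ht) /andP [le_i _] /(allP Hs) /andP [j_lt _]; exact: leq_trans j_lt le_i.
Qed.

End Model.

Theorem theorem3p2 (d : measure_display) (Omega : measurableType d)
  (R : realType) (P : probability Omega R)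
  (tau : option nat) (X : nat -> nat) (k : forall n, 'I_(X n) -> nat)
  (E : forall n, Omega -> edges X n)
  (sigma : forall n, Omega -> {perm 'I_(X n)}) :
  (forall n, lt_tau tau n -> (0 < X n)%N) ->
  (forall n, lt_tau tau n.+1 -> (\sum_(i < X n) k n i)%N = X n.+1) ->
  discrete_rv E (valid_edge tau) ->
  discrete_rv sigma (lt_tau tau) ->
  genealogy_model tau k E ->
  forward_neutral P tau E \/ backward_neutral P tau E ->
  uniform_perms P tau sigma ->
  indep_fam P (fdd_events sigma (lt_tau tau)) (fdd_events E (valid_edge tau)) ->
  [/\ completely_neutral P tau (perm_edges sigma E),
      forward_neutral P tau E ->
        forall n, indep_fam P
          (fdd_events (perm_edges sigma E)
             (fun m => (n <= m)%N && valid_edge tau m))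
          (fdd_events sigma (fun m => (m <= n)%N && lt_tau tau m))
    & backward_neutral P tau E ->
        forall n, indep_fam P
          (fdd_events (perm_edges sigma E)
             (fun m => (m < n)%N && valid_edge tau m))
          (fdd_events sigma (fun m => (n <= m)%N && lt_tau tau m))].
Proof.
move=> _ _ mE msigma gen_E fwd_bwd unif_sigma indep_sigma_E; split.
- exact: (perm_edges_completely_neutral mE msigma gen_E unif_sigma indep_sigma_E fwd_bwd).
- exact: (forward_perm_indep mE msigma gen_E unif_sigma indep_sigma_E).
- exact: (backward_perm_indep mE msigma gen_E unif_sigma indep_sigma_E).
Qed.
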